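(* Let $M:D\to E$ be the continuous map with $D=\{x,y,z,c\}$ having open sets $\emptyset,\{x,y,z\},D$, $E=\{u,v\}$ antidiscrete, $M(x)=M(y)=u$, $M(z)=M(c)=v$; and let $k:\{\bullet\}\to S$ send the point to the closed point $c$ of the Sierpinski space $S=\{o,c\}$ (open sets $\emptyset,\{o\},S$). Then, in $\mathrm{Top}$, $\{M\}^{ll}=\{k\}^l$, and this is the class of continuous maps with dense image.
   Context: For continuous maps $f:A\to B$, $g:C\to D'$, $f\pitchfork g$ means: for all continuous $t:A\to C$, $b:B\to D'$ with $g\circ t=b\circ f$ there is continuous $d:B\to C$ with $d\circ f=t$, $g\circ d=b$. For a class $P$, $P^l=\{f: f\pitchfork g\ \forall g\in P\}$, $P^{ll}=(P^l)^l$. *)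

From HB Require Import structures.
From mathcomp Require Import all_boot all_order.
From mathcomp Require Import all_classical topology.
Set Implicit Arguments. Unset Strict Implicit. Unset Printing Implicit Defensive.
Local Open Scope classical_set_scope.

Definition lifts {A B C D : topologicalType} (f : A -> B) (g : C -> D) : Prop :=
  forall (t : A -> C) (b : B -> D), continuous t -> continuous b ->
    g \o t = b \o f ->
    exists d : B -> C, [/\ continuous d, d \o f = t & g \o d = b].

Definition mor_class := forall A B : topologicalType, (A -> B) -> Prop.

Definition lorth (P : mor_class) : mor_class :=
  fun A B f => continuous f /\ forall (C D : topologicalType) (g : C -> D), P C D g -> lifts f g.

Definition single {C D : topologicalType} (g : C -> D) : mor_class :=
  fun A B f => exists (eA : A = C) (eB : B = D),
    (fun x : C => eq_rect B (fun T : topologicalType => T) (f (eq_rect_r (fun T : topologicalType => T) x eA)) D eB) = g.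

Definition op3 (T : Type) (U : set T) : set_system T :=
  [set A | A = set0 \/ A = U \/ A = setT].

Lemma op3T T (U : set T) : op3 U setT.
Proof. by right; right. Qed.

Lemma op3I T (U : set T) : setI_closed (op3 U).
Proof.
move=> A B [->|[->|->]] [->|[->|->]]; rewrite /op3 /=;
  rewrite ?set0I ?setI0 ?setIid ?setIT ?setTI; tauto.
Qed.

Lemma op3U T (U : set T) (I : Type) (f : I -> set T) :
  (forall i, op3 U (f i)) -> op3 U (\bigcup_i f i).
Proof.
move=> hf.
have [[i fiT]|nT] := pselect (exists i, f i = setT).
  right; right; apply/seteqP; split=> // x _; exists i => //; by rewrite fiT.
have [[i fiU]|nU] := pselect (exists i, f i = U).
  right; left; apply/seteqP; split.
    move=> x [j _ fjx]; have [h|[h|h]] := hf j.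
    - by move: fjx; rewrite h.
    - by move: fjx; rewrite h.
    - by exfalso; apply: nT; exists j.
  by move=> x Ux; exists i => //; rewrite fiU.
left; apply/seteqP; split=> // x [j _ fjx]; have [h|[h|h]] := hf j.
- by move: fjx; rewrite h.
- by exfalso; apply: nU; exists j.
- by exfalso; apply: nT; exists j.
Qed.

Inductive Dpt := Dx | Dy | Dz | Dc.
Definition Dpt_to (p : Dpt) : 'I_4 :=
  match p with Dx => inord 0 | Dy => inord 1 | Dz => inord 2 | Dc => inord 3 end.
Definition Dpt_of (i : 'I_4) : Dpt :=
  match val i with 0 => Dx | 1 => Dy | 2 => Dz | _ => Dc end.
Lemma Dpt_K : cancel Dpt_to Dpt_of. Proof. by case; rewrite /Dpt_of /= inordK. Qed.
HB.instance Definition _ := Choice.copy Dpt (can_type Dpt_K).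
HB.instance Definition _ :=
  @isOpenTopological.Build Dpt (op3 [set p | p != Dc]) (op3T _) (@op3I _ _) (@op3U _ _).

Inductive Ept := Eu | Ev.
Definition Ept_to (p : Ept) : bool := if p is Eu then true else false.
Definition Ept_of (b : bool) : Ept := if b then Eu else Ev.
Lemma Ept_K : cancel Ept_to Ept_of. Proof. by case. Qed.
HB.instance Definition _ := Choice.copy Ept (can_type Ept_K).
HB.instance Definition _ :=
  @isOpenTopological.Build Ept (op3 (@set0 Ept)) (op3T _) (@op3I _ _) (@op3U _ _).

Inductive Spt := So | Sc.
Definition Spt_to (p : Spt) : bool := if p is So then true else false.
Definition Spt_of (b : bool) : Spt := if b then So else Sc.
Lemma Spt_K : cancel Spt_to Spt_of. Proof. by case. Qed.
HB.instance Definition _ := Choice.copy Spt (can_type Spt_K).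
HB.instance Definition _ :=
  @isOpenTopological.Build Spt (op3 [set So]) (op3T _) (@op3I _ _) (@op3U _ _).

Inductive Pt := bullet.
Definition Pt_to (p : Pt) : unit := tt.
Definition Pt_of (u : unit) : Pt := bullet.
Lemma Pt_K : cancel Pt_to Pt_of. Proof. by case. Qed.
HB.instance Definition _ := Choice.copy Pt (can_type Pt_K).
HB.instance Definition _ :=
  @isOpenTopological.Build Pt (op3 (@set0 Pt)) (op3T _) (@op3I _ _) (@op3U _ _).

Definition M (p : Dpt) : Ept :=
  match p with Dx | Dy => Eu | Dz | Dc => Ev end.
Definition k (_ : Pt) : Spt := Sc.

From HB Require Import structures.
From mathcomp Require Import all_boot all_order.
From mathcomp Require Import all_classical topology.
Local Open Scope classical_set_scope.

(* A map lifting against M is injective (a two-point fibre could be sent to x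
   and y, which M identifies) and closed (send a closed set F to c and its
   complement to x; a lift d recovers g(F) as the closed set d^-1(c)).
   Conversely, if f has dense image and g is injective and closed, the bottom
   map b of any square lands in the closed set range g, since b^-1(range g)
   contains the dense set range f; hence b factors through g, continuously
   because g is closed.  Lifting against k says exactly that f has dense image,
   and k itself lifts against M, so both inclusions follow. *)

Definition closed_map {C D : topologicalType} (g : C -> D) : Prop :=
  forall F : set C, closed F -> closed (g @` F).

Lemma lorth_singleP {C D : topologicalType} (g : C -> D)
    {A B : topologicalType} (f : A -> B) :
  lorth (single g) f <-> continuous f /\ lifts f g.
Proof.
split=> -[cf fg]; split=> //; first by apply: fg; exists erefl, erefl.
by move=> C' D' g' [eC [eD eg]]; subst C' D'; have -> : g' = g by exact: eg.
Qed.

Lemma continuous_op3 (X T : topologicalType) (U : set T) (h : X -> T) :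
  (forall A : set T, open A -> op3 U A) -> open (h @^-1` U) -> continuous h.
Proof.
move=> open_op3 hU; apply/continuousP => A /open_op3 [->|[->|->]] //.
- by rewrite preimage_set0; exact: open0.
- by rewrite preimage_setT; exact: openT.
Qed.

Lemma continuous_to_Dpt {X : topologicalType} (h : X -> Dpt) :
  open [set x | h x != Dc] -> continuous h.
Proof. exact: (@continuous_op3 _ _ [set p | p != Dc]). Qed.

Lemma continuous_to_Ept {X : topologicalType} (h : X -> Ept) : continuous h.
Proof.
by apply: (@continuous_op3 _ _ set0) => //; rewrite preimage_set0; exact: open0.
Qed.

Lemma continuous_to_Spt {X : topologicalType} (h : X -> Spt) :
  open [set x | h x = So] -> continuous h.
Proof. exact: (@continuous_op3 _ _ [set So]). Qed.

Lemma open_So : open [set So].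
Proof. by right; left. Qed.

Lemma open_neq_Dc : open [set p : Dpt | p != Dc].
Proof. by right; left. Qed.

Lemma closed_Dc : closed [set Dc].
Proof.
rewrite -[X in closed X]setCK closedC.
have -> : ~` [set Dc] = [set p : Dpt | p != Dc].
  by apply/seteqP; split=> p /= /eqP.
exact: open_neq_Dc.
Qed.

Lemma lifts_M_injective {C D : topologicalType} {g : C -> D} :
  lifts g M -> injective g.
Proof.
move=> gM a1 a2 ga12.
pose t a := if a == a1 then Dx else Dy.
have ct : continuous t.
  apply: continuous_to_Dpt; have -> : [set a | t a != Dc] = setT.
    by apply/seteqP; split=> // a _; rewrite /t /=; case: ifP => _; apply/eqP.
  exact: openT.
have sq : M \o t = cst Eu \o g by apply: funext => a; rewrite /t /=; case: ifP.
have [d [_ dg _]] := gM t (cst Eu) ct (@cst_continuous _ _ Eu) sq.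
have : t a2 = t a1 by rewrite -dg /= ga12.
by rewrite /t eqxx; case: eqP => [->|].
Qed.

Lemma lifts_M_closed_map {C D : topologicalType} {g : C -> D} :
  lifts g M -> closed_map g.
Proof.
move=> gM F cF; have g_inj := lifts_M_injective gM.
pose t a := if pselect (F a) then Dc else Dx.
pose b q := if pselect ((g @` F) q) then Ev else Eu.
have ct : continuous t.
  apply: continuous_to_Dpt; have -> : [set a | t a != Dc] = ~` F.
    apply/seteqP; split=> a; rewrite /t /=; case: pselect => Fa; rewrite ?eqxx //.
    by move=> _; apply/eqP.
  by rewrite openC.
have sq : M \o t = b \o g.
  apply: funext => a; rewrite /t /b /=; case: pselect => Fa; case: pselect => //= gFa.
  - by case: gFa; exists a.
  - by case: gFa => a' Fa' /g_inj ea; case: Fa; rewrite -ea.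
have [d [cd dg Md]] := gM t b ct (continuous_to_Ept b) sq.
have -> : g @` F = d @^-1` [set Dc].
  apply/seteqP; split=> [q [a Fa <-]|q /= dq].
    by rewrite /= -[d (g a)]/((d \o g) a) dg /t; case: pselect.
  have := congr1 (fun h => h q) Md; rewrite /= dq /b.
  by case: pselect.
by move/continuous_closedP: cd; apply; exact: closed_Dc.
Qed.

Lemma k_lifts_M : lifts k M.
Proof.
move=> t b _ _ sq.
pose d s := if s is Sc then t bullet else if b So is Eu then Dx else Dz.
exists d; split.
- apply: continuous_to_Dpt.
  have [tc|tnc] := pselect (t bullet = Dc).
    have -> : [set s | d s != Dc] = [set So].
      apply/seteqP; split=> -[] /=; rewrite ?tc ?eqxx //.
      by case: (b So) => _; apply/eqP.
    exact: open_So.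
  have -> : [set s | d s != Dc] = setT.
    apply/seteqP; split=> // -[] _ /=; apply/eqP => //.
    by case: (b So).
  exact: openT.
- by apply: funext => -[].
- apply: funext => -[] /=; first by case: (b So).
  exact: (congr1 (fun h => h bullet) sq).
Qed.

Lemma lifts_k_dense {A B : topologicalType} (f : A -> B) :
  lifts f k <-> dense (range f).
Proof.
split=> [fk O [q Oq] oO|df t b _ cb sq].
  apply: contrapT => Of_empty.
  pose b q := if pselect (O q) then So else Sc.
  have cb : continuous b.
    apply: continuous_to_Spt; have -> : [set q | b q = So] = O.
      by apply/seteqP; split=> x; rewrite /b /=; case: pselect.
    exact: oO.
  have sq : k \o cst bullet = b \o f.
    apply: funext => a; rewrite /b /=; case: pselect => // Ofa.
    by case: Of_empty; exists (f a); split=> //; exists a.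
  have [d [_ _ kd]] := fk _ b (@cst_continuous _ _ bullet) cb sq.
  by have := congr1 (fun h => h q) kd; rewrite /= /b; case: pselect.
exists (cst bullet); split.
- exact: cst_continuous.
- by apply: funext => a /=; case: (t a).
apply: funext => q /=; case bq: (b q) => //.
have oO : open (b @^-1` [set So]) by exact: (continuousP b).1 cb _ open_So.
have [x [/= bx [a _ fax]]] := df _ (ex_intro _ q bq) oO.
by have := congr1 (fun h => h a) sq; rewrite /= fax bx.
Qed.

Lemma dense_lifts {A B C D : topologicalType} (f : A -> B) (g : C -> D) :
  dense (range f) -> injective g -> closed_map g -> lifts f g.
Proof.
move=> df g_inj g_closed t b _ cb sq.
have b_in_range q : exists c, g c = b q.
  apply: contrapT => nq.
  have oO : open (~` (b @^-1` range g)).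
    rewrite openC; move/continuous_closedP: cb; apply.
    by apply: g_closed; exact: closedT.
  have ne : ~` (b @^-1` range g) !=set0 by exists q => -[c _ gc]; apply: nq; exists c.
  have [x [nx [a _ fax]]] := df _ ne oO.
  by apply: nx; rewrite /= -fax; exists (t a) => //; have := congr1 (fun h => h a) sq.
pose d q := projT1 (cid (b_in_range q)).
have gd q : g (d q) = b q := projT2 (cid (b_in_range q)).
exists d; split.
- apply/continuous_closedP => F cF.
  have -> : d @^-1` F = b @^-1` (g @` F).
    apply/seteqP; split=> q /= => [Fdq|[c Fc]]; first by exists (d q).
    by rewrite -gd => /g_inj <-.
  by move/continuous_closedP: cb; apply; exact: g_closed.
- apply: funext => a /=; apply: g_inj; rewrite gd.
  by have := congr1 (fun h => h a) sq.
- exact: funext.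
Qed.

Theorem mainTheorem8 :
  forall (A B : topologicalType) (f : A -> B),
    (lorth (lorth (single M)) f <-> lorth (single k) f) /\
    (lorth (single k) f <-> continuous f /\ dense (range f)).
Proof.
move=> A B f.
have k_orth_M : lorth (single M) k.
  by apply/lorth_singleP; split; [exact: cst_continuous | exact: k_lifts_M].
have orth_k_dense : lorth (single k) f <-> continuous f /\ dense (range f).
  by rewrite lorth_singleP; split=> -[cf]; rewrite lifts_k_dense.
split=> //; split=> [[cf f_orth]|/orth_k_dense [cf df]].
  by apply/lorth_singleP; split=> //; exact: f_orth k_orth_M.
split=> // C D g /lorth_singleP [_ gM].
exact: dense_lifts df (lifts_M_injective gM) (lifts_M_closed_map gM).
Qed.
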